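(* Let $(X,Y)$ be a random pair with $X\in\mathbb{R}^p$, $Y\in\mathbb{R}^q$ and $(X_1,Y_1),\ldots,(X_4,Y_4)$ i.i.d. copies of it. If $\mathbb{E}[|X|^2]<\infty$, $\mathbb{E}[|Y|^2]<\infty$ and $\mathbb{E}[|X|^2|Y|^2]<\infty$, then $\mathrm{Var}(h_4)<\infty$, where $h_4=h_4((X_1,Y_1),\ldots,(X_4,Y_4))$. Consequently $\mathrm{Var}(h_1)<\infty$ and $\mathrm{Var}(h_2)<\infty$.
   Context: $|\cdot|$ Euclidean norm. The kernel $h_4$ is $$h_4((X_1,Y_1),\ldots,(X_4,Y_4))=\frac14\sum_{1\le i,j\le4,i\ne j}|X_i-X_j||Y_i-Y_j|-\frac14\sum_{i=1}^4\Big(\sum_{j\ne i}|X_i-X_j|\Big)\Big(\sum_{j\ne i}|Y_i-Y_j|\Big)+\frac1{24}\Big(\sum_{i\ne j}|X_i-X_j|\Big)\Big(\sum_{i\ne j}|Y_i-Y_j|\Big).$$ $h_1((X_1,Y_1))=\mathbb{E}_{2,3,4}[h_4]$ (expectation over $(X_2,Y_2),(X_3,Y_3),(X_4,Y_4)$) and $h_2((X_1,Y_1),(X_2,Y_2))=\mathbb{E}_{3,4}[h_4]$ (expectation over $(X_3,Y_3),(X_4,Y_4)$). *)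

From HB Require Import structures.
From mathcomp Require Import all_boot all_order all_algebra.
From mathcomp Require Import all_classical all_reals all_analysis.
Set Implicit Arguments. Unset Strict Implicit. Unset Printing Implicit Defensive.
Import Order.TTheory GRing.Theory Num.Theory.
Local Open Scope ring_scope.
Local Open Scope classical_set_scope.

Definition eucl (R : realType) (n : nat) (v : 'rV[R]_n) : R :=
  Num.sqrt (\sum_(i < n) v ord0 i ^+ 2).

Definition h4 (R : realType) (p q : nat) (X : 'I_4 -> 'rV[R]_p) (Y : 'I_4 -> 'rV[R]_q) : R :=
  let a i j := eucl (X i - X j) in
  let b i j := eucl (Y i - Y j) in
  4^-1 * (\sum_(i < 4) \sum_(j < 4 | i != j) a i j * b i j)
  - 4^-1 * (\sum_(i < 4) ((\sum_(j < 4 | j != i) a i j) * (\sum_(j < 4 | j != i) b i j)))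
  + 24^-1 * ((\sum_(i < 4) \sum_(j < 4 | i != j) a i j)
             * (\sum_(i < 4) \sum_(j < 4 | i != j) b i j)).

Definition pt4 (T : Type) (t1 t2 t3 t4 : T) (i : 'I_4) : T :=
  match val i with 0 => t1 | 1 => t2 | 2 => t3 | _ => t4 end.

Section kernels.
Context (R : realType) (d : measure_display) (T : measurableType d)
  (P : probability T R) (p q : nat) (X : T -> 'rV[R]_p) (Y : T -> 'rV[R]_q).

(* h_4 as a function of four independent samples (canonical product model) *)
Definition H4 (w : T * T * T * T) : R :=
  let t := pt4 w.1.1.1 w.1.1.2 w.1.2 w.2 in
  h4 (fun i => X (t i)) (fun i => Y (t i)).

Definition H1 (t1 : T) : R :=
  fine (\int[(P \x P \x P)%E]_w (H4 (t1, w.1.1, w.1.2, w.2))%:E)%E.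

Definition H2 (t12 : T * T) : R :=
  fine (\int[(P \x P)%E]_w (H4 (t12.1, t12.2, w.1, w.2))%:E)%E.
End kernels.

Definition finite_variance (R : realType) (d : measure_display) (T : measurableType d)
  (mu : probability T R) (f : T -> R) : Prop :=
  mu.-integrable setT (EFin \o f) /\
  (\int[mu]_x ((f x - fine (\int[mu]_y (f y)%:E)%E) ^+ 2)%:E < +oo)%E.

From HB Require Import structures.
From mathcomp Require Import all_boot all_order all_algebra.
From mathcomp Require Import all_classical all_reals all_analysis.
From mathcomp Require Import measurable_realfun ring lra.
Set Implicit Arguments. Unset Strict Implicit. Unset Printing Implicit Defensive.
Import Order.TTheory GRing.Theory Num.Theory.
Local Open Scope ring_scope.
Local Open Scope classical_set_scope.

(* Since |v - w|^2 <= 2|v|^2 + 2|w|^2, every distance |X_i - X_j| is at most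
   2 prod_k <X_k>, where <v> = sqrt (1 + |v|^2); hence |h_4| <= 64 prod_k w(t_k)
   for the weight w = <X><Y>.  The three moment hypotheses say exactly that
   w^2 = (1 + |X|^2)(1 + |Y|^2) is integrable, so w is integrable as well and,
   by Tonelli, so are the products of copies of w and of w^2 over independent
   samples.  This makes h_4 square integrable, while integrating out the
   remaining samples bounds |h_1| by a multiple of w(t_1) and |h_2| by a
   multiple of w(t_1) w(t_2). *)

Section kernel_bound.
Context (R : realType).

Definition bracket n (v : 'rV[R]_n) : R := Num.sqrt (1 + eucl v ^+ 2).

Lemma sqr_eucl n (v : 'rV[R]_n) : eucl v ^+ 2 = \sum_(i < n) v ord0 i ^+ 2.
Proof. by rewrite sqr_sqrtr // sumr_ge0 // => i _; rewrite sqr_ge0. Qed.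

Lemma sqr_eucl_subr_le n (u v : 'rV[R]_n) :
  eucl (u - v) ^+ 2 <= 2 * eucl u ^+ 2 + 2 * eucl v ^+ 2.
Proof.
rewrite !sqr_eucl !mulr_sumr -big_split /=; apply: ler_sum => i _.
rewrite !mxE; have := sqr_ge0 (u ord0 i + v ord0 i); nra.
Qed.

Lemma sqr_bracket n (v : 'rV[R]_n) : bracket v ^+ 2 = 1 + eucl v ^+ 2.
Proof. by rewrite sqr_sqrtr // addr_ge0 // sqr_ge0. Qed.

Lemma bracket_ge1 n (v : 'rV[R]_n) : 1 <= bracket v.
Proof. by rewrite -sqrtr1 ler_sqrt ?lerDl ?sqr_ge0 // addr_ge0 ?sqr_ge0. Qed.

Lemma ler_factor_prod (I : finType) (F : I -> R) (i : I) :
  (forall k, 1 <= F k) -> F i <= \prod_k F k.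
Proof.
move=> F1; have F0 k : 0 <= F k by exact: le_trans ler01 (F1 k).
rewrite (bigD1 i) //= ler_peMr //.
by elim/big_ind: _ => // x y; apply: mulr_ege1.
Qed.

Lemma eucl_subr_le_prod_bracket n (I : finType) (Z : I -> 'rV[R]_n) (i j : I) :
  eucl (Z i - Z j) <= 2 * \prod_k bracket (Z k).
Proof.
have B1 k : 1 <= bracket (Z k) by exact: bracket_ge1.
have [Bi Bj] := (ler_factor_prod i B1, ler_factor_prod j B1).
have B0 : 0 <= \prod_k bracket (Z k) by exact: le_trans ler01 (le_trans (B1 i) Bi).
rewrite -(@ler_pXn2r _ 2) ?nnegrE ?sqrtr_ge0 ?mulr_ge0 //.
apply: le_trans (sqr_eucl_subr_le _ _) _.
have le_sqr k : bracket (Z k) <= \prod_k bracket (Z k) ->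
    1 + eucl (Z k) ^+ 2 <= (\prod_k bracket (Z k)) ^+ 2.
  by rewrite -sqr_bracket ler_pXn2r // nnegrE (le_trans ler01 (B1 k)).
have := le_sqr _ Bi; have := le_sqr _ Bj; rewrite exprMn; lra.
Qed.

Lemma sum_ord_bound n (P : pred 'I_n) (f : 'I_n -> R) (A : R) :
  (forall i, 0 <= f i <= A) -> 0 <= \sum_(i < n | P i) f i <= n%:R * A.
Proof.
move=> fA; have f0 i : 0 <= f i by have /andP[] := fA i.
rewrite sumr_ge0 //=; apply: le_trans (_ : \sum_(i < n) f i <= _).
  by rewrite big_mkcond; apply: ler_sum => i _; case: (P i).
rewrite mulr_natl -[n in A *+ n]card_ord -sumr_const; apply: ler_sum => i _.
by have /andP[] := fA i.
Qed.

Lemma h4_le p q (X : 'I_4 -> 'rV[R]_p) (Y : 'I_4 -> 'rV[R]_q) (A B : R) :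
  (forall i j, eucl (X i - X j) <= A) -> (forall i j, eucl (Y i - Y j) <= B) ->
  `|h4 X Y| <= 16 * (A * B).
Proof.
move=> XA YB.
have Xb i j : 0 <= eucl (X i - X j) <= A by rewrite sqrtr_ge0 XA.
have Yb i j : 0 <= eucl (Y i - Y j) <= B by rewrite sqrtr_ge0 YB.
have mulb x y A' B' : 0 <= x <= A' -> 0 <= y <= B' -> 0 <= x * y <= A' * B'.
  by move=> /andP[x0 xA] /andP[y0 yB]; rewrite mulr_ge0 // ler_pM.
have /andP[S1 S1'] : 0 <= \sum_(i < 4) \sum_(j < 4 | i != j)
    eucl (X i - X j) * eucl (Y i - Y j) <= 4%:R * (4%:R * (A * B)).
  by do 2![apply: sum_ord_bound => ?]; apply: mulb.
have /andP[S2 S2'] : 0 <= \sum_(i < 4) ((\sum_(j < 4 | j != i) eucl (X i - X j))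
    * (\sum_(j < 4 | j != i) eucl (Y i - Y j))) <= 4%:R * (4%:R * A * (4%:R * B)).
  by apply: sum_ord_bound => i; apply: mulb; apply: sum_ord_bound.
have /andP[S3 S3'] : 0 <= (\sum_(i < 4) \sum_(j < 4 | i != j) eucl (X i - X j))
    * (\sum_(i < 4) \sum_(j < 4 | i != j) eucl (Y i - Y j))
    <= 4%:R * (4%:R * A) * (4%:R * (4%:R * B)).
  by apply: mulb; do 2![apply: sum_ord_bound => ?].
rewrite /h4 /= ler_norml; apply/andP; split; nra.
Qed.

Lemma h4_le_prod_bracket p q (X : 'I_4 -> 'rV[R]_p) (Y : 'I_4 -> 'rV[R]_q) :
  `|h4 X Y| <= 64 * \prod_(k < 4) (bracket (X k) * bracket (Y k)).
Proof.
apply: le_trans (h4_le (eucl_subr_le_prod_bracket X) (eucl_subr_le_prod_bracket Y)) _.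
rewrite big_split /=; lra.
Qed.

Lemma prod_pt4 (T : Type) (F : T -> R) (t1 t2 t3 t4 : T) :
  \prod_(k < 4) F (pt4 t1 t2 t3 t4 k) = F t1 * F t2 * F t3 * F t4.
Proof. by rewrite !big_ord_recr big_ord0 /= mul1r. Qed.

End kernel_bound.

Section nonneg_integrable.
Context (R : realType) (d : measure_display) (T : measurableType d).
Implicit Types (mu : {measure set T -> \bar R}) (f g : T -> R).

Definition nonneg_integrable mu f :=
  [/\ measurable_fun setT f, forall x, 0 <= f x & (\int[mu]_x (f x)%:E < +oo)%E].

Lemma nonneg_integrable_cst (mu : {finite_measure set T -> \bar R}) (c : R) :
  0 <= c -> nonneg_integrable mu (fun=> c).
Proof.
move=> c0; split => //.
by rewrite integral_cst //= lte_mul_pinfty // -ge0_fin_numE ?fin_num_measure.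
Qed.

Lemma nonneg_integrableD mu f g :
  nonneg_integrable mu f -> nonneg_integrable mu g ->
  nonneg_integrable mu (fun x => f x + g x).
Proof.
move=> [mf f0 fi] [mg g0 gi]; split => [|x|]; first exact: measurable_funD.
  by rewrite addr_ge0.
under eq_integral do rewrite EFinD.
rewrite ge0_integralD //; first exact: lte_add_pinfty.
all: try by move=> x _; rewrite lee_fin.
all: exact/measurable_EFinP.
Qed.

Lemma nonneg_integrableZl mu f (c : R) :
  0 <= c -> nonneg_integrable mu f -> nonneg_integrable mu (fun x => c * f x).
Proof.
move=> c0 [mf f0 fi]; split => [|x|]; first exact: measurable_funM.
  by rewrite mulr_ge0.
under eq_integral do rewrite EFinM.
rewrite ge0_integralZl_EFin ?lte_mul_pinfty //; last exact/measurable_EFinP.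
by move=> x _; rewrite lee_fin.
Qed.

Lemma nonneg_integrable_le mu f g :
  measurable_fun setT f -> (forall x, 0 <= f x <= g x) ->
  nonneg_integrable mu g -> nonneg_integrable mu f.
Proof.
move=> mf fg [mg _ gi]; have f0 x : 0 <= f x by have /andP[] := fg x.
split => //; apply: le_lt_trans gi; apply: ge0_le_integral => //.
- by move=> x _; rewrite lee_fin.
- exact/measurable_EFinP.
- exact/measurable_EFinP.
- by move=> x _; rewrite lee_fin; have /andP[] := fg x.
Qed.

End nonneg_integrable.

Lemma nonneg_integrable_prod (R : realType) d1 d2 (T1 : measurableType d1)
    (T2 : measurableType d2) (mu : probability T1 R)
    (nu : probability T2 R) (f : T1 -> R) (g : T2 -> R) :
  nonneg_integrable mu f -> nonneg_integrable nu g ->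
  nonneg_integrable (mu \x nu)%E (fun z => f z.1 * g z.2).
Proof.
move=> [mf f0 fi] [mg g0 gi].
have mfg : measurable_fun setT (fun z : T1 * T2 => f z.1 * g z.2).
  by apply: measurable_funM; apply: measurableT_comp.
have g0E y : (0 <= (g y)%:E)%E by rewrite lee_fin.
have int_g0 : (0 <= \int[nu]_y (g y)%:E)%E by exact: integral_ge0.
split => [//|z|]; first by rewrite mulr_ge0.
rewrite fubini_tonelli1 /fubini_F /=; last 2 first.
- exact/measurable_EFinP.
- by move=> z; rewrite lee_fin mulr_ge0.
under eq_integral => x _.
  under eq_integral do rewrite EFinM.
  rewrite ge0_integralZl_EFin //; last exact/measurable_EFinP.
  rewrite muleC.
  over.
rewrite ge0_integralZl //; first by rewrite lte_mul_pinfty // ge0_fin_numE.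
- exact/measurable_EFinP.
- by move=> x _; rewrite lee_fin.
Qed.

Lemma nonneg_integrable_sqr_prod (R : realType) d1 d2 (T1 : measurableType d1)
    (T2 : measurableType d2) (mu : probability T1 R)
    (nu : probability T2 R) (f : T1 -> R) (g : T2 -> R) :
  nonneg_integrable mu (fun x => f x ^+ 2) -> nonneg_integrable nu (fun y => g y ^+ 2) ->
  nonneg_integrable (mu \x nu)%E (fun z => (f z.1 * g z.2) ^+ 2).
Proof.
move=> f2 g2; rewrite (_ : (fun z => _) = fun z => f z.1 ^+ 2 * g z.2 ^+ 2).
  exact: nonneg_integrable_prod f2 g2.
by apply/funext => z; rewrite exprMn.
Qed.

Section finite_variance.
Context (R : realType) (d : measure_display) (T : measurableType d)
  (mu : probability T R).

Lemma finite_variance_sqr_integrable (f : T -> R) :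
  measurable_fun setT f -> nonneg_integrable mu (fun x => f x ^+ 2) ->
  finite_variance mu f.
Proof.
move=> mf f2; set c := fine (\int[mu]_y (f y)%:E)%E.
have one_f2 := nonneg_integrableD (nonneg_integrable_cst mu ler01) f2.
have absf : nonneg_integrable mu (fun x => `|f x|).
  apply: nonneg_integrable_le one_f2; first exact: measurableT_comp.
  move=> x; rewrite normr_ge0 /= -(real_normK (num_real (f x))).
  by have := sqr_ge0 (`|f x| - 1); nra.
have dev_bound := nonneg_integrableD (nonneg_integrableZl (c := 2) (ler0n _ 2) f2)
  (nonneg_integrable_cst mu (mulr_ge0 (ler0n _ 2) (sqr_ge0 c))).
have dev : nonneg_integrable mu (fun x => (f x - c) ^+ 2).
  apply: nonneg_integrable_le dev_bound.
    by apply: measurable_funX; apply: measurable_funB.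
  by move=> x; rewrite sqr_ge0 /=; have := sqr_ge0 (f x + c); nra.
split; last by case: dev.
apply/integrableP; split; first exact/measurable_EFinP.
by case: absf.
Qed.

Lemma finite_variance_dominated (f g : T -> R) (c : R) :
  measurable_fun setT f -> nonneg_integrable mu (fun x => g x ^+ 2) ->
  (forall x, `|f x| <= c * g x) -> finite_variance mu f.
Proof.
move=> mf g2 fg; apply: finite_variance_sqr_integrable => //.
apply: nonneg_integrable_le (nonneg_integrableZl (sqr_ge0 c) g2).
  exact: measurable_funX.
move=> x; rewrite sqr_ge0 -exprMn -(real_normK (num_real (f x))).
by rewrite ler_pXn2r ?nnegrE ?fg // (le_trans _ (fg x)).
Qed.

End finite_variance.

Section partial_integral.
Context (R : realType) d1 d2 (T1 : measurableType d1) (T2 : measurableType d2).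

Lemma measurable_fine_partial_integral (nu : probability T2 R)
    (F : T1 * T2 -> R) :
  measurable_fun setT F ->
  measurable_fun setT (fun x => fine (\int[nu]_y (F (x, y))%:E)%E).
Proof.
move=> mF; have mEF : measurable_fun setT (EFin \o F) by exact/measurable_EFinP.
apply: (measurableT_comp (fine_measurable _)) => //.
have -> : (fun x => \int[nu]_y (F (x, y))%:E)%E =
    ((fun x => \int[nu]_y ((EFin \o F)^\+ (x, y)))
     \- (fun x => \int[nu]_y ((EFin \o F)^\- (x, y))))%E.
  apply/funext => x; rewrite [LHS]integralE /=.
  by congr (_ - _)%E; apply: eq_integral => y _; rewrite !(funeposE, funenegE).
apply: emeasurable_funB; apply: measurable_fun_fubini_tonelli_F.
- exact: measurable_funepos.
- by move=> z; exact: funepos_ge0.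
- exact: measurable_funeneg.
- by move=> z; exact: funeneg_ge0.
Qed.

Lemma normr_fine_integral_le (mu : {measure set T2 -> \bar R}) (f g : T2 -> R) (c : R) :
  measurable_fun setT f -> 0 <= c -> nonneg_integrable mu g ->
  (forall y, `|f y| <= c * g y) ->
  `|fine (\int[mu]_y (f y)%:E)%E| <= c * fine (\int[mu]_y (g y)%:E)%E.
Proof.
move=> mf c0 [mg g0 gi] fg.
set Ig := (\int[mu]_y (g y)%:E)%E.
have Ig0 : (0 <= Ig)%E by apply: integral_ge0 => y _; rewrite lee_fin.
have Ig_fin : Ig \is a fin_num by rewrite ge0_fin_numE.
suff : (`|\int[mu]_y (f y)%:E| <= (c * fine Ig)%:E)%E.
  by case: (\int[mu]_y _)%E => [r| |] //=; rewrite ?lee_fin // normr0 => _;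
    rewrite mulr_ge0 // fine_ge0.
apply: le_trans (le_abse_integral _ _ _) _ => //; first exact/measurable_EFinP.
rewrite EFinM fineK // -ge0_integralZl_EFin //; last 2 first.
- by move=> y _; rewrite lee_fin.
- exact/measurable_EFinP.
apply: ge0_le_integral => //.
- apply: measurableT_comp => //; exact/measurable_EFinP.
- by apply/measurable_EFinP; apply: measurable_funM.
- by move=> y _ /=; rewrite -EFinM lee_fin.
Qed.

Lemma finite_variance_partial_integral (mu : probability T1 R)
    (nu : probability T2 R) (F : T1 * T2 -> R)
    (f : T1 -> R) (g : T2 -> R) (c : R) :
  measurable_fun setT F -> 0 <= c -> (forall x, 0 <= f x) ->
  nonneg_integrable mu (fun x => f x ^+ 2) -> nonneg_integrable nu g ->
  (forall x y, `|F (x, y)| <= c * (f x * g y)) ->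
  finite_variance mu (fun x => fine (\int[nu]_y (F (x, y))%:E)%E).
Proof.
move=> mF c0 f0 f2 gi Fb.
apply: (@finite_variance_dominated _ _ _ _ _ f (c * fine (\int[nu]_y (g y)%:E)%E)) => //.
  exact: measurable_fine_partial_integral.
move=> x; rewrite mulrAC; apply: normr_fine_integral_le => //.
- exact: measurable_fun_pair2.
- by rewrite mulr_ge0.
- by move=> y; rewrite -mulrA Fb.
Qed.

End partial_integral.

Section measurable_kernel.
Context (R : realType) (d : measure_display) (W : measurableType d).

Lemma measurable_sum_pred (I : Type) (s : seq I) (P : pred I) (h : I -> W -> R) :
  (forall i, measurable_fun setT (h i)) ->
  measurable_fun setT (fun x => \sum_(i <- s | P i) h i x).
Proof. by move=> mh; under eq_fun do rewrite -big_filter; exact: measurable_sum. Qed.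

Lemma measurable_sqrtr : measurable_fun setT (@Num.sqrt R).
Proof. by apply: continuous_measurable_fun; exact: sqrt_continuous. Qed.

Lemma measurable_eucl n (Z : W -> 'rV[R]_n) :
  (forall k, measurable_fun setT (fun w => Z w ord0 k)) ->
  measurable_fun setT (fun w => eucl (Z w)).
Proof.
move=> mZ; apply: measurableT_comp measurable_sqrtr _.
by apply: measurable_sum => k; exact: measurable_funX.
Qed.

Lemma measurable_bracket n (Z : W -> 'rV[R]_n) :
  (forall k, measurable_fun setT (fun w => Z w ord0 k)) ->
  measurable_fun setT (fun w => bracket (Z w)).
Proof.
move=> mZ; apply: measurableT_comp measurable_sqrtr _.
by apply: measurable_funD => //; exact/measurable_funX/measurable_eucl.
Qed.

Lemma measurable_h4 p q (Xs : W -> 'I_4 -> 'rV[R]_p) (Ys : W -> 'I_4 -> 'rV[R]_q) :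
  (forall i k, measurable_fun setT (fun w => Xs w i ord0 k)) ->
  (forall i k, measurable_fun setT (fun w => Ys w i ord0 k)) ->
  measurable_fun setT (fun w => h4 (Xs w) (Ys w)).
Proof.
move=> mX mY.
have mdist n (Zs : W -> 'I_4 -> 'rV[R]_n) i j :
    (forall i k, measurable_fun setT (fun w => Zs w i ord0 k)) ->
    measurable_fun setT (fun w => eucl (Zs w i - Zs w j)).
  move=> mZ; apply: measurable_eucl => k.
  under eq_fun do rewrite !mxE; exact: measurable_funB.
rewrite /h4 /=.
repeat first [ apply: measurable_funB | apply: measurable_funD
             | apply: measurable_funM | apply: measurable_sum_pred => ?
             | exact: measurable_cst | exact: mdist ].
Qed.

Lemma measurable_pt4 d' (T : measurableType d') (f1 f2 f3 f4 : W -> T) :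
  measurable_fun setT f1 -> measurable_fun setT f2 ->
  measurable_fun setT f3 -> measurable_fun setT f4 ->
  forall i, measurable_fun setT (fun w => pt4 (f1 w) (f2 w) (f3 w) (f4 w) i).
Proof. by move=> m1 m2 m3 m4; case=> [[|[|[|[|?]]]] ?]. Qed.

End measurable_kernel.

Section sampled_kernel.
Context (R : realType) (d : measure_display) (T : measurableType d) (p q : nat)
  (X : T -> 'rV[R]_p) (Y : T -> 'rV[R]_q).

Definition weight (t : T) : R := bracket (X t) * bracket (Y t).

Lemma weight_ge1 t : 1 <= weight t.
Proof. by rewrite mulr_ege1 // bracket_ge1. Qed.

Lemma H4_le w :
  `|H4 X Y w| <= 64 * (weight w.1.1.1 * weight w.1.1.2 * weight w.1.2 * weight w.2).
Proof. by rewrite -prod_pt4; exact: h4_le_prod_bracket. Qed.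

Hypotheses (mX : forall k, measurable_fun setT (fun t => X t ord0 k))
           (mY : forall k, measurable_fun setT (fun t => Y t ord0 k)).

Lemma measurable_H4_comp d' (W : measurableType d') (f1 f2 f3 f4 : W -> T) :
  measurable_fun setT f1 -> measurable_fun setT f2 ->
  measurable_fun setT f3 -> measurable_fun setT f4 ->
  measurable_fun setT (fun w => H4 X Y (f1 w, f2 w, f3 w, f4 w)).
Proof.
move=> m1 m2 m3 m4; have mpt := measurable_pt4 m1 m2 m3 m4.
by apply: measurable_h4 => i k; [exact: measurableT_comp (mX k) (mpt i)
                               | exact: measurableT_comp (mY k) (mpt i)].
Qed.

Lemma nonneg_integrable_sqr_weight (P : {finite_measure set T -> \bar R}) :
  (\int[P]_t ((eucl (X t)) ^+ 2)%:E < +oo)%E ->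
  (\int[P]_t ((eucl (Y t)) ^+ 2)%:E < +oo)%E ->
  (\int[P]_t ((eucl (X t)) ^+ 2 * (eucl (Y t)) ^+ 2)%:E < +oo)%E ->
  nonneg_integrable P (fun t => weight t ^+ 2).
Proof.
move=> hX hY hXY.
have mX2 : measurable_fun setT (fun t => eucl (X t) ^+ 2).
  exact/measurable_funX/measurable_eucl.
have mY2 : measurable_fun setT (fun t => eucl (Y t) ^+ 2).
  exact/measurable_funX/measurable_eucl.
have X2 : nonneg_integrable P (fun t => eucl (X t) ^+ 2) by split=> // t; rewrite sqr_ge0.
have Y2 : nonneg_integrable P (fun t => eucl (Y t) ^+ 2) by split=> // t; rewrite sqr_ge0.
have XY2 : nonneg_integrable P (fun t => eucl (X t) ^+ 2 * eucl (Y t) ^+ 2).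
  by split=> [|t|//]; [exact: measurable_funM | rewrite mulr_ge0 ?sqr_ge0].
rewrite (_ : (fun t => _) = fun t =>
    1 + eucl (X t) ^+ 2 + eucl (Y t) ^+ 2 + eucl (X t) ^+ 2 * eucl (Y t) ^+ 2).
  by do 3!apply: nonneg_integrableD => //; exact: nonneg_integrable_cst.
by apply/funext => t; rewrite /weight exprMn !sqr_bracket; ring.
Qed.

Lemma nonneg_integrable_weight (P : {measure set T -> \bar R}) :
  nonneg_integrable P (fun t => weight t ^+ 2) -> nonneg_integrable P weight.
Proof.
move=> w2; apply: nonneg_integrable_le w2.
  by apply: measurable_funM; exact: measurable_bracket.
move=> t; have w1 := weight_ge1 t.
by rewrite (le_trans ler01 w1) expr2 ler_peMr // (le_trans ler01 w1).
Qed.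

End sampled_kernel.

Unset Implicit Arguments.
Set Strict Implicit.

Theorem lemma4p8 (R : realType) (d : measure_display) (T : measurableType d)
  (P : probability T R) (p q : nat) (X : T -> 'rV[R]_p) (Y : T -> 'rV[R]_q)
  (mX : forall i : 'I_p, measurable_fun setT (fun t => X t ord0 i))
  (mY : forall j : 'I_q, measurable_fun setT (fun t => Y t ord0 j))
  (hX : (\int[P]_t ((eucl (X t)) ^+ 2)%:E < +oo)%E)
  (hY : (\int[P]_t ((eucl (Y t)) ^+ 2)%:E < +oo)%E)
  (hXY : (\int[P]_t ((eucl (X t)) ^+ 2 * (eucl (Y t)) ^+ 2)%:E < +oo)%E) :
  finite_variance (P \x P \x P \x P)%E (H4 X Y) /\
  finite_variance P (H1 P X Y) /\
  finite_variance (P \x P)%E (H2 P X Y).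
Proof.
pose N := weight X Y.
have N0 t : 0 <= N t by exact: le_trans ler01 (weight_ge1 X Y t).
have N2 : nonneg_integrable P (fun t => N t ^+ 2).
  exact: nonneg_integrable_sqr_weight.
have N1 : nonneg_integrable P N by exact: nonneg_integrable_weight.
have N2_2 := nonneg_integrable_sqr_prod N2 N2.
have N1_2 := nonneg_integrable_prod N1 N1.
have N1_3 := nonneg_integrable_prod N1_2 N1.
have N2_4 := nonneg_integrable_sqr_prod (nonneg_integrable_sqr_prod N2_2 N2) N2.
have mH4 := measurable_H4_comp mX mY.
split; [|split].
- apply: (finite_variance_dominated _ N2_4); last exact: H4_le.
  by apply: mH4; do ![exact: measurable_fst | exact: measurable_snd
                     | apply: measurableT_comp].
- have mF : measurable_fun setT
      (fun z : T * (T * T * T) => H4 X Y (z.1, z.2.1.1, z.2.1.2, z.2.2)).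
    by apply: mH4; do ![exact: measurable_fst | exact: measurable_snd
                       | apply: measurableT_comp].
  apply: (finite_variance_partial_integral mF (ler0n _ 64) N0 N2 N1_3) => x y.
  by apply: le_trans (H4_le X Y (x, y.1.1, y.1.2, y.2)) _; rewrite /= !mulrA.
- have mF : measurable_fun setT
      (fun z : (T * T) * (T * T) => H4 X Y (z.1.1, z.1.2, z.2.1, z.2.2)).
    by apply: mH4; do ![exact: measurable_fst | exact: measurable_snd
                       | apply: measurableT_comp].
  have N0_2 x : 0 <= N x.1 * N x.2 by rewrite mulr_ge0.
  apply: (finite_variance_partial_integral mF (ler0n _ 64) N0_2 N2_2 N1_2) => x y.
  by apply: le_trans (H4_le X Y (x.1, x.2, y.1, y.2)) _; rewrite /= !mulrA.
Qed.
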